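(* Let $C'=\{0000,0222,0444,2024,2240,2402,4042,4204,4420\}\subseteq\mathbb Z_6^4$ and $C''=\{3333+c: c\in C'\}$ (addition in $\mathbb Z_6^4$). Then $C'\cup C''$ is a code of size $18$ with minimum Lee distance at least $6$, and every code $C\subseteq\mathbb Z_6^4$ with $|C|=18$ and minimum Lee distance at least $6$ is Lee equivalent to $C'\cup C''$.
   Context: For $u,v\in\mathbb Z_q^n$ (entries viewed as integers in $\{0,\dots,q-1\}$) the Lee distance is $d_L(u,v)=\sum_{i=1}^n\min\{|u_i-v_i|,\,q-|u_i-v_i|\}$; the minimum Lee distance of a code is the minimum of $d_L$ over distinct codewords. Let $D_q$ be the dihedral group of order $2q$ acting on $\mathbb Z_q$ by $x\mapsto\pm x+c$; $D_q^n\rtimes S_n$ acts on $\mathbb Z_q^n$ coordinatewise by $D_q$ and by permuting coordinates. Two codes $C,D\subseteq\mathbb Z_q^n$ are Lee equivalent if $g\cdot C=D$ for some $g\in D_q^n\rtimes S_n$. *)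

From mathcomp Require Import all_boot all_algebra all_fingroup.
Set Implicit Arguments. Unset Strict Implicit. Unset Printing Implicit Defensive.
Import GRing.Theory.
Local Open Scope ring_scope.

(* Words of length n over Z_q (intended q >= 2, where 'Z_q = 'I_q). *)
Definition word (q n : nat) := {ffun 'I_n -> 'Z_q}.

Definition lee1 (q : nat) (x y : 'Z_q) : nat :=
  let d := if (val x <= val y)%N then (val y - val x)%N else (val x - val y)%N in
  minn d (q - d).

Definition lee_dist (q n : nat) (u v : word q n) : nat :=
  (\sum_(i < n) lee1 (u i) (v i))%N.

(* Minimum Lee distance at least d (for codes with >= 2 words this is
   exactly "min over distinct pairs >= d"). *)
Definition min_lee_ge (q n : nat) (C : {set word q n}) (d : nat) : Prop :=
  forall u v, u \in C -> v \in C -> u != v -> (d <= lee_dist u v)%N.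

(* Action of g = ((eps_i, c_i)_i, s) in D_q^n x| S_n:
   coordinates are permuted by s, then each coordinate is acted on by
   x |-> +-x + c. *)
Definition lee_act (q n : nat) (s : {perm 'I_n}) (e : {ffun 'I_n -> bool})
  (c : {ffun 'I_n -> 'Z_q}) (u : word q n) : word q n :=
  [ffun i => (if e i then - u (s i) else u (s i)) + c i].

Definition lee_equiv (q n : nat) (C D : {set word q n}) : Prop :=
  exists (s : {perm 'I_n}) (e : {ffun 'I_n -> bool}) (c : {ffun 'I_n -> 'Z_q}),
    [set lee_act s e c u | u in C] = D.

Definition w4 (a b c d : nat) : word 6 4 :=
  [ffun i : 'I_4 => inZp (nth 0%N [:: a; b; c; d] i) : 'Z_6].

Definition Cp : {set word 6 4} :=
  [set w4 0 0 0 0; w4 0 2 2 2; w4 0 4 4 4; w4 2 0 2 4; w4 2 2 4 0;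
       w4 2 4 0 2; w4 4 0 4 2; w4 4 2 0 4; w4 4 4 2 0].

Definition Cpp : {set word 6 4} :=
  [set [ffun i => w4 3 3 3 3 i + c i] | c : word 6 4 in Cp].

Definition C0 : {set word 6 4} := Cp :|: Cpp.

From mathcomp Require Import all_boot all_algebra all_fingroup zify.
Set Implicit Arguments. Unset Strict Implicit. Unset Printing Implicit Defensive.
Import GRing.Theory.
Local Open Scope ring_scope.

(* The group D_q^n x| S_n acts on Z_q^n by Lee isometries (lee_dist_act), so
   it preserves sizes and minimum distances of codes.  Given a code C of 18
   words of Z_6^4 with minimum Lee distance 6, translate it so that it
   contains 0, and split it according to the block {0,1}, {2,3} or {4,5} of
   the first coordinate.  An isometry maps any word of a block to 0 and the
   block onto {0,1}; an exhaustive search then shows that each block holds at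
   most 6 words of the code (block_card_le6), hence exactly 6.  A second
   exhaustive search enumerates all ways of choosing the three blocks
   (cliques of pairwise far words, with [cliques] proved complete) and checks
   that each resulting code is C0 up to coordinatewise sign changes. *)

Section LeeIsometries.
Variable p : nat.
Local Notation q := p.+2.

Lemma val_subZp (x y : 'Z_q) :
  val (x - y) = if (val y <= val x)%N then (val x - val y)%N else (q - (val y - val x))%N.
Proof.
case: x y => [x x_lt] [y y_lt] /=; rewrite modnDmr; rewrite /Zp_trunc /= in x_lt y_lt *.
case: leqP => le_yx.
  by rewrite addnBA 1?ltnW // addnC -addnBA // modnDl modn_small // ltn_subLR; lia.
by rewrite modn_small; lia.
Qed.

(* The Lee weight of x - y is the smaller of the two residues x - y, y - x;
   this makes translation and negation invariance immediate. *)
Lemma lee1_minn (x y : 'Z_q) : lee1 x y = minn (val (x - y)) (val (y - x)).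
Proof.
rewrite /lee1 !val_subZp; case: (ltngtP (val x) (val y)) => cmp_xy.
- by rewrite minnC; congr minn; lia.
- by congr minn; lia.
- by rewrite cmp_xy subnn subn0 minn0 min0n.
Qed.

Lemma lee1_addr (a x y : 'Z_q) : lee1 (x + a) (y + a) = lee1 x y.
Proof.
have sub_shift (u v : 'Z_q) : (u + a) - (v + a) = u - v.
  by rewrite opprD addrACA subrr addr0.
by rewrite !lee1_minn !sub_shift.
Qed.

Lemma lee1_opp (x y : 'Z_q) : lee1 (- x) (- y) = lee1 x y.
Proof.
have sub_opp (u v : 'Z_q) : - u - - v = v - u by rewrite opprK addrC.
by rewrite !lee1_minn !sub_opp minnC.
Qed.

Variable n : nat.
Implicit Types (s : {perm 'I_n}) (e : {ffun 'I_n -> bool}) (c : {ffun 'I_n -> 'Z_q}).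

Lemma lee_dist_act s e c (u v : word q n) :
  lee_dist (lee_act s e c u) (lee_act s e c v) = lee_dist u v.
Proof.
rewrite /lee_dist [RHS](reindex_inj (@perm_inj _ s)); apply: eq_bigr => i _.
by rewrite !ffunE lee1_addr; case: (e i); rewrite ?lee1_opp.
Qed.

Lemma lee_act_inj s e c : injective (lee_act s e c).
Proof.
move=> u v /ffunP eq_uv; apply/ffunP => j; have := eq_uv (s^-1 j)%g.
by rewrite !ffunE permKV => /addIr; case: (e _) => //; apply: oppr_inj.
Qed.

Lemma card_lee_act s e c (C : {set word q n}) :
  #|[set lee_act s e c u | u in C]| = #|C|.
Proof. exact/card_imset/lee_act_inj. Qed.

Lemma min_lee_ge_act s e c (C : {set word q n}) d :
  min_lee_ge C d -> min_lee_ge [set lee_act s e c u | u in C] d.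
Proof.
move=> dC _ _ /imsetP [u uC ->] /imsetP [v vC ->] neq.
rewrite lee_dist_act; apply: dC => //; by apply: contraNneq neq => ->.
Qed.

Lemma translate_self (a : word q n) : lee_act 1 [ffun=> false] [ffun i => - a i] a = 0.
Proof. by apply/ffunP => i; rewrite !ffunE perm1 subrr. Qed.

Lemma sign_after_translate e (a u : word q n) :
  lee_act 1 e 0 (lee_act 1 [ffun=> false] [ffun i => - a i] u) =
  lee_act 1 e [ffun i => if e i then a i else - a i] u.
Proof.
by apply/ffunP => i; rewrite !ffunE !perm1 addr0; case: (e i); rewrite ?opprD ?opprK.
Qed.

Lemma min_lee_ge_sub (A B : {set word q n}) d :
  B \subset A -> min_lee_ge A d -> min_lee_ge B d.
Proof. by move=> /subsetP sBA dA u v /sBA uA /sBA vA; apply: dA. Qed.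
End LeeIsometries.

Section Cliques.
Variables (T : eqType) (r : rel T).

Fixpoint cliques (k : nat) : seq T -> seq (seq T) :=
  match k with
  | 0 => fun _ => [:: [::]]
  | k'.+1 => fix cliques_k L := match L with
      | [::] => [::]
      | x :: L' => if (size L < k'.+1)%N then [::] else
           map (cons x) (cliques k' (filter (r x) L')) ++ cliques_k L'
      end
  end.

Lemma cliques_complete k L S :
  subseq S L -> size S = k -> pairwise r S -> S \in cliques k L.
Proof.
elim: k L S => [|k IHk] L S; first by case: S.
elim: L S => [|x L IHL] S; first by move/eqP=> ->.
move=> sub_S size_S pw_S /=.
rewrite ltnNge -size_S (size_subseq sub_S) /= mem_cat.
case: S sub_S size_S pw_S => [//|y S] /= sub_S [size_S] /andP [ry pw_S].
case: eqP sub_S => [<- sub_S|_ sub_S].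
  by rewrite map_f // IHk // subseq_filter ry.
by apply/orP; right; have := IHL (y :: S) sub_S; rewrite /= size_S ry pw_S; apply.
Qed.

Lemma pairwise_of_distinct (s : seq T) :
  uniq s -> {in s &, forall x y, x != y -> r x y} -> pairwise r s.
Proof.
rewrite uniq_pairwise => uniq_s rs.
by apply: (sub_in_pairwise _ (allss s) uniq_s) => x y /rs; apply.
Qed.
End Cliques.

(* A computable model of Z_6^4: quadruples of naturals, with the Lee distance
   computed digitwise.  Bounded quadruples (digits < 6) are in bijection with
   words through [word_of]/[quad_of]. *)
Definition quad := (nat * nat * nat * nat)%type.

Definition origin : quad := (0, 0, 0, 0)%N.

Definition bounded (x : quad) : bool :=
  let: (a, b, c, d) := x in [&& a < 6, b < 6, c < 6 & d < 6]%N.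

Definition lee1n (a b : nat) : nat :=
  let d := if (a <= b)%N then (b - a)%N else (a - b)%N in minn d (6 - d).

Definition lee_distn (x y : quad) : nat :=
  let: (a, b, c, d) := x in let: (a', b', c', d') := y in
  (lee1n a a' + (lee1n b b' + (lee1n c c' + lee1n d d')))%N.

Definition far (x y : quad) : bool := (6 <= lee_distn x y)%N.

Definition word_of (x : quad) : word 6 4 := let: (a, b, c, d) := x in w4 a b c d.

Definition quad_of (u : word 6 4) : quad :=
  (val (u (inord 0)), val (u (inord 1)), val (u (inord 2)), val (u (inord 3))).

Definition digits : seq nat := iota 0 6.

Definition quads : seq quad :=
  [seq (abc, d) | abc <- [seq (ab, c) | ab <- [seq (a, b) | a <- digits, b <- digits],
                                       c <- digits], d <- digits].

Lemma mem_pairs (S T : eqType) (s : seq S) (t : seq T) x y :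
  ((x, y) \in [seq (x, y) | x <- s, y <- t]) = (x \in s) && (y \in t).
Proof.
apply/allpairsP/andP => [[[x' y'] /= [? ? [-> ->]]] | [? ?]] //.
by exists (x, y).
Qed.

Lemma uniq_pairs (S T : eqType) (s : seq S) (t : seq T) :
  uniq s -> uniq t -> uniq [seq (x, y) | x <- s, y <- t].
Proof. by move=> us ut; apply: allpairs_uniq => // -[? ?] [? ?]. Qed.

Lemma mem_quads x : (x \in quads) = bounded x.
Proof. by case: x => [[[a b] c] d]; rewrite /quads !mem_pairs !mem_iota -!andbA. Qed.

Lemma uniq_quads : uniq quads.
Proof. by rewrite /quads !uniq_pairs ?iota_uniq. Qed.

Lemma word_ofE x i : word_of x i = inZp (nth 0%N [:: x.1.1.1; x.1.1.2; x.1.2; x.2] i).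
Proof. by case: x => [[[a b] c] d]; rewrite ffunE. Qed.

Lemma word_ofK x : bounded x -> quad_of (word_of x) = x.
Proof.
case: x => [[[a b] c] d] /and4P [? ? ? ?].
by rewrite /quad_of !word_ofE !inordK //= !modn_small.
Qed.

Lemma quad_ofK u : word_of (quad_of u) = u.
Proof.
apply/ffunP => i; rewrite word_ofE.
case: i => [[|[|[|[|//]]]] ?] /=;
  by rewrite valZpK; congr (u _); apply/val_inj; rewrite /= inordK.
Qed.

Lemma bounded_quad_of u : bounded (quad_of u).
Proof. by rewrite /bounded /quad_of /= !ltn_ord. Qed.

Lemma word_of_inj : {in bounded &, injective word_of}.
Proof. by move=> x y bx byy exy; rewrite -(word_ofK bx) -(word_ofK byy) exy. Qed.

Lemma lee_dist_word_of x y :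
  bounded x -> bounded y -> lee_dist (word_of x) (word_of y) = lee_distn x y.
Proof.
case: x => [[[a b] c] d] /and4P [? ? ? ?]; case: y => [[[a' b'] c'] d'] /and4P [? ? ? ?].
by rewrite /lee_dist !big_ord_recl big_ord0 addn0 !word_ofE /lee1 /= !modn_small.
Qed.

(* The quadruples representing the words of a code [A].  The definition is
   locked so that unification never tries to evaluate the filter. *)
Fact quads_of_key : unit. Proof. by []. Qed.

Definition quads_of : {set word 6 4} -> seq quad :=
  locked_with quads_of_key (fun A => [seq x <- quads | word_of x \in A]).

Lemma quads_ofE A : quads_of A = [seq x <- quads | word_of x \in A].
Proof. by rewrite /quads_of locked_withE. Qed.

Lemma mem_quads_of A x : (x \in quads_of A) = bounded x && (word_of x \in A).
Proof. by rewrite quads_ofE mem_filter mem_quads andbC. Qed.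

Lemma uniq_quads_of A : uniq (quads_of A).
Proof. by rewrite quads_ofE filter_uniq ?uniq_quads. Qed.

Lemma size_quads_of A : size (quads_of A) = #|A|.
Proof.
have uniq_A : uniq (map word_of (quads_of A)).
  rewrite map_inj_in_uniq ?uniq_quads_of // => x y.
  by rewrite !mem_quads_of => /andP [bx _] /andP [byy _]; apply: word_of_inj.
rewrite -(size_map word_of) -(card_uniqP uniq_A); apply: eq_card => w.
apply/mapP/idP => [[x] | wA]; first by rewrite mem_quads_of => /andP [_ ?] ->.
by exists (quad_of w); rewrite ?quad_ofK // mem_quads_of bounded_quad_of quad_ofK.
Qed.

Lemma far_quads_of (A : {set word 6 4}) x y : min_lee_ge A 6 ->
  x \in quads_of A -> y \in quads_of A -> x != y -> far x y.
Proof.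
move=> dA; rewrite !mem_quads_of => /andP [bx xA] /andP [byy yA] neq.
rewrite /far -lee_dist_word_of // dA //.
by apply: contraNneq neq => /word_of_inj ->.
Qed.

Lemma quads_of_clique (P : pred quad) (A : {set word 6 4}) :
  min_lee_ge A 6 -> {in quads_of A, forall x, P x} ->
  subseq (quads_of A) (filter P quads) /\ pairwise far (quads_of A).
Proof.
have sub_quads : subseq (quads_of A) quads by rewrite quads_ofE filter_subseq.
move=> dA PA; split; first by rewrite subseq_filter sub_quads andbT; apply/allP.
by apply: pairwise_of_distinct (uniq_quads_of A) _ => x y; apply: far_quads_of.
Qed.

Lemma clique_of_code (P : pred quad) (A : {set word 6 4}) k :
  min_lee_ge A 6 -> #|A| = k -> {in quads_of A, forall x, P x} ->
  quads_of A \in cliques far k (filter P quads).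
Proof.
move=> dA <- PA; have [sub_A pw_A] := quads_of_clique dA PA.
exact: cliques_complete sub_A (size_quads_of A) pw_A.
Qed.

Definition block (k : nat) : {set word 6 4} := [set u : word 6 4 | (val (u ord0) %/ 2 == k)%N].

Definition in_block (k : nat) (x : quad) : bool := (x.1.1.1 %/ 2 == k)%N.

Lemma in_block_word_of k x : bounded x -> (word_of x \in block k) = in_block k x.
Proof.
by case: x => [[[a b] c] d] /and4P [? _ _ _]; rewrite inE word_ofE /= modn_small.
Qed.

Lemma word_of_origin : word_of origin = 0.
Proof.
by apply/ffunP => i; rewrite word_ofE ffunE; apply/val_inj; case: i => [[|[|[|[|]]]] ?].
Qed.

Lemma block_cover x : bounded x -> [|| in_block 0 x, in_block 1 x | in_block 2 x].
Proof.
case: x => [[[a b] c] d] /and4P [a6 _ _ _]; rewrite /in_block /=.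
have : (a %/ 2 < 3)%N by rewrite ltn_divLR.
by case: (a %/ 2)%N => [|[|[|]]].
Qed.

Lemma word_block_cover (w : word 6 4) : [|| w \in block 0, w \in block 1 | w \in block 2].
Proof.
have := block_cover (bounded_quad_of w).
by rewrite -!in_block_word_of ?bounded_quad_of // quad_ofK.
Qed.

Definition normalizer (x : word 6 4) : word 6 4 -> word 6 4 :=
  let e := [ffun i => (i == ord0) && odd (x i)] in
  lee_act 1 e [ffun i => if e i then x i else - x i].

Lemma normalizer_self x : normalizer x x = 0.
Proof. by apply/ffunP => i; rewrite !ffunE perm1; case: ifP; rewrite ?addNr ?subrr. Qed.

Lemma block_shift (a b : 'Z_6) : (val b %/ 2 = val a %/ 2)%N ->
  (val ((if odd a then - b else b) + (if odd a then a else - a))%R %/ 2 == 0)%N.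
Proof. by case: a b => [[|[|[|[|[|[|//]]]]]] ?] [[|[|[|[|[|[|//]]]]]] ?]. Qed.

Lemma normalizer_block k x u :
  x \in block k -> u \in block k -> normalizer x u \in block 0.
Proof.
rewrite !inE !ffunE perm1 eqxx !andTb => /eqP <- /eqP; exact: block_shift.
Qed.

Definition far_block0 : seq quad := [seq y <- quads | in_block 0 y && far origin y].

Lemma no_six_far_in_block0 : cliques far 6 far_block0 = [::].
Proof. by vm_compute. Qed.

Lemma block_card_le6 k (A : {set word 6 4}) :
  min_lee_ge A 6 -> A \subset block k -> (#|A| <= 6)%N.
Proof.
move=> dA sAk; have [-> | [x xA]] := set_0Vmem A; first by rewrite cards0.
pose B := [set normalizer x u | u in A].
have dB : min_lee_ge B 6 by apply: min_lee_ge_act.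
have B0 : 0 \in B by rewrite -(normalizer_self x) imset_f.
pose G := B :\ (0 : word 6 4).
have dG : min_lee_ge G 6 := min_lee_ge_sub (subsetDl _ _) dB.
have sizeG : size (quads_of G) = #|A|.-1.
  have cardB : #|B| = #|A| by exact: card_lee_act.
  by rewrite size_quads_of -cardB (cardsD1 (0 : word 6 4) B) B0.
have [sub_G pw_G] : subseq (quads_of G) far_block0 /\ pairwise far (quads_of G).
  apply: quads_of_clique => // y; rewrite mem_quads_of => /andP [y_bnd /setD1P [y_neq0 yB]].
  rewrite -in_block_word_of //; apply/andP; split.
    by case/imsetP: yB => u uA ->; apply: (normalizer_block (k := k)); apply: (subsetP sAk).
  by rewrite /far -lee_dist_word_of // word_of_origin dB // eq_sym.
rewrite leqNgt; apply/negP => A_gt6.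
have : take 6 (quads_of G) \in cliques far 6 far_block0.
  apply: cliques_complete; first exact: subseq_trans (take_subseq _ _) sub_G.
    by rewrite size_takel // sizeG -ltnS (ltn_predK A_gt6).
  exact: subseq_pairwise (take_subseq _ _) pw_G.
by rewrite no_six_far_in_block0.
Qed.

Lemma count_blocks (s : seq quad) : all bounded s ->
  (count (in_block 0) s + count (in_block 1) s + count (in_block 2) s)%N = size s.
Proof.
elim: s => //= -[[[a b] c] d] s IHs /andP [/and4P [a6 _ _ _] /IHs <-].
rewrite /in_block /=; have : (a %/ 2 < 3)%N by rewrite ltn_divLR.
by case: (a %/ 2)%N => [|[|[|]]] //= _; lia.
Qed.

Lemma quads_of_block (A : {set word 6 4}) k :
  quads_of (A :&: block k) = filter (in_block k) (quads_of A).
Proof.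
rewrite !quads_ofE -filter_predI; apply: eq_in_filter => x; rewrite mem_quads inE => bx.
by rewrite in_block_word_of // andbC.
Qed.

Lemma count_block_quads_of (A : {set word 6 4}) k :
  count (in_block k) (quads_of A) = #|A :&: block k|.
Proof. by rewrite -size_filter -quads_of_block size_quads_of. Qed.

Lemma block_cards (A : {set word 6 4}) k : #|A| = 18%N -> min_lee_ge A 6 ->
  (k < 3)%N -> #|A :&: block k| = 6%N.
Proof.
move=> cardA dA k3.
have le6 l : (#|A :&: block l| <= 6)%N.
  exact: (block_card_le6 (min_lee_ge_sub (subsetIl _ _) dA) (subsetIr _ (block l))).
have bA : all bounded (quads_of A) by apply/allP => x; rewrite mem_quads_of => /andP [].
have := count_blocks bA; rewrite !count_block_quads_of size_quads_of cardA.
have := le6 0%N; have := le6 1%N; have := le6 2%N.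
by case: k k3 => [|[|[|]]] //= _; lia.
Qed.

Definition flip_quad (e : seq bool) (x : quad) : quad :=
  let: (a, b, c, d) := x in
  let f k v := if nth false e k then ((6 - v) %% 6)%N else v in (f 0 a, f 1 b, f 2 c, f 3 d).

Definition shift3 (x : quad) : quad :=
  let: (a, b, c, d) := x in ((3 + a) %% 6, (3 + b) %% 6, (3 + c) %% 6, (3 + d) %% 6)%N.

Definition cp_quads : seq quad :=
  [:: (0, 0, 0, 0); (0, 2, 2, 2); (0, 4, 4, 4); (2, 0, 2, 4); (2, 2, 4, 0);
      (2, 4, 0, 2); (4, 0, 4, 2); (4, 2, 0, 4); (4, 4, 2, 0)]%N.

Definition c0_quads : seq quad := cp_quads ++ map shift3 cp_quads.

Definition sign_patterns : seq (seq bool) :=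
  iter 4 (fun ps => [seq b :: p | b <- [:: false; true], p <- ps]) [:: [::]].

Definition sign_word (e : seq bool) : {ffun 'I_4 -> bool} := [ffun i : 'I_4 => nth false e i].

Lemma opp_inZp6 a : (a < 6)%N -> - (inZp a : 'Z_6) = inZp ((6 - a) %% 6).
Proof.
move=> a6; apply/val_inj => /=; change (Zp_trunc 6).+2 with 6%N.
by rewrite (modn_small a6) modn_mod.
Qed.

Lemma flip_word_of e x : bounded x ->
  lee_act 1 (sign_word e) 0 (word_of x) = word_of (flip_quad e x).
Proof.
move=> bx; apply/ffunP => i; rewrite !ffunE perm1 addr0 !word_ofE.
case: x bx => [[[a b] c] d] /and4P [? ? ? ?].
by case: i => [[|[|[|[|//]]]] ?] /=; case: (nth false e _); rewrite ?opp_inZp6.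
Qed.

Lemma mem_map_word_of (s : seq quad) w :
  all bounded s -> (w \in map word_of s) = (quad_of w \in s).
Proof.
move=> /allP bs; apply/mapP/idP => [[x xs ->] | ws]; first by rewrite word_ofK ?bs.
by exists (quad_of w); rewrite ?quad_ofK.
Qed.

Lemma shift3_word_of y : [ffun i => w4 3 3 3 3 i + word_of y i] = word_of (shift3 y).
Proof.
apply/ffunP => i; rewrite !ffunE !word_ofE; apply/val_inj => /=; rewrite modnDm.
by case: y => [[[a b] c] d]; case: i => [[|[|[|[|//]]]] ?]; rewrite /= modn_mod.
Qed.

Lemma C0_quads : C0 =i map word_of c0_quads.
Proof.
have Cp_quads : Cp =i map word_of cp_quads by move=> w; rewrite /Cp !inE /= -!orbA.
move=> w; rewrite /C0 inE map_cat mem_cat -map_comp Cp_quads; congr orb.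
apply/imsetP/mapP => [[c] | [y ycp ->]].
  by rewrite Cp_quads => /mapP [y ycp ->] ->; exists y; rewrite //= -shift3_word_of.
by exists (word_of y); rewrite ?Cp_quads ?map_f //= -shift3_word_of.
Qed.

Lemma c0_quads_ok :
  [&& all bounded c0_quads, uniq c0_quads &
      all (fun x => all (fun y => (x == y) || far x y) c0_quads) c0_quads].
Proof. by vm_compute. Qed.

Lemma card_C0 : #|C0| = 18%N.
Proof.
have /and3P [/allP bC uC _] := c0_quads_ok.
have uniq_C : uniq (map word_of c0_quads).
  by rewrite map_inj_in_uniq // => x y xC yC; apply: word_of_inj (bC x xC) (bC y yC).
by rewrite (eq_card C0_quads) (card_uniqP uniq_C) size_map.
Qed.

Lemma min_lee_ge_C0 : min_lee_ge C0 6.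
Proof.
have /and3P [/allP bC _ /allP farC] := c0_quads_ok.
move=> u v; rewrite !C0_quads => /mapP [x xC ->] /mapP [y yC ->] neq.
rewrite lee_dist_word_of ?bC //; have /orP [/eqP exy | //] := allP (farC x xC) y yC.
by rewrite exy eqxx in neq.
Qed.

Lemma quads_ofK (A : {set word 6 4}) : map word_of (quads_of A) =i A.
Proof.
move=> w; rewrite mem_map_word_of ?mem_quads_of ?bounded_quad_of ?quad_ofK //.
by apply/allP => x; rewrite mem_quads_of => /andP [].
Qed.

Definition matches_C0 (s : seq quad) : bool :=
  has (fun e => perm_eq (map (flip_quad e) s) c0_quads) sign_patterns.

Definition compatible (k : nat) (P : seq quad) : seq quad :=
  [seq y <- quads | in_block k y && all (far^~ y) P].

(* The exhaustive search for codes of 18 words containing the origin with six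
   words in each block: the words of block 0 other than the origin form a
   5-clique of [far_block0], those of blocks 1 and 2 are 6-cliques of
   quadruples compatible with the previous blocks, and every such choice
   yields C0 up to sign changes. *)
Definition classification_certificate : bool :=
  all (fun K0 => let P0 := origin :: K0 in
    all (fun K1 => all (fun K2 => matches_C0 (P0 ++ K1 ++ K2))
                        (cliques far 6 (compatible 2 (P0 ++ K1))))
        (cliques far 6 (compatible 1 P0)))
    (cliques far 5 far_block0).

Lemma classification_certificate_holds : classification_certificate.
Proof. by vm_compute. Qed.

Lemma quads_of_cover (A B0 B1 B2 : {set word 6 4}) :
  (forall w, (w \in A) = [|| w == 0, w \in B0, w \in B1 | w \in B2]) ->
  quads_of A =i origin :: quads_of B0 ++ quads_of B1 ++ quads_of B2.
Proof.
move=> coverA x; rewrite in_cons !mem_cat !mem_quads_of coverA.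
have [-> | x_neq] := eqVneq x origin; first by rewrite word_of_origin eqxx.
have [bx | //] := boolP (bounded x).
have -> // : (word_of x == 0) = false.
by apply/negbTE; rewrite -word_of_origin; apply: contra_neq x_neq => /word_of_inj ->.
Qed.

Lemma mem_quads_of_sub (A D : {set word 6 4}) x :
  D \subset A -> x \in quads_of D -> x \in quads_of A.
Proof. by move=> /subsetP sDA; rewrite !mem_quads_of => /andP [-> /sDA]. Qed.

Lemma in_block_quads_of (D : {set word 6 4}) k x :
  D \subset block k -> x \in quads_of D -> in_block k x.
Proof.
by move=> /subsetP sDk; rewrite mem_quads_of => /andP [bx /sDk]; rewrite in_block_word_of.
Qed.

Lemma in_blockN k l x : in_block k x -> l != k -> ~~ in_block l x.
Proof. by rewrite /in_block => /eqP ->; rewrite eq_sym. Qed.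

Lemma compatible_clique (A : {set word 6 4}) k (P : seq quad) :
  #|A| = 18%N -> min_lee_ge A 6 -> (k < 3)%N ->
  {in P, forall z, (z \in quads_of A) && ~~ in_block k z} ->
  quads_of (A :&: block k) \in cliques far 6 (compatible k P).
Proof.
move=> cardA dA k3 PA.
apply: (clique_of_code (min_lee_ge_sub (subsetIl _ _) dA) (block_cards cardA dA k3)).
move=> y yK; rewrite (in_block_quads_of (subsetIr _ _) yK); apply/allP => z /PA /andP [zA zk].
apply: far_quads_of dA zA (mem_quads_of_sub (subsetIl _ _) yK) _.
by apply: contraNneq zk => ->; apply: in_block_quads_of (subsetIr _ _) yK.
Qed.

Lemma sign_matching (A : {set word 6 4}) :
  #|A| = 18%N -> min_lee_ge A 6 -> 0 \in A ->
  exists e, map (flip_quad e) (quads_of A) =i c0_quads.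
Proof.
move=> cardA dA A0.
pose A0' := A :&: block 0 :\ (0 : word 6 4).
pose K0 := quads_of A0'.
pose K1 := quads_of (A :&: block 1); pose K2 := quads_of (A :&: block 2).
have origin_A : origin \in quads_of A by rewrite mem_quads_of word_of_origin A0.
have sA0 : A0' \subset A by rewrite /A0' setDE -setIA subsetIl.
have sA0b : A0' \subset block 0 by rewrite /A0' setDE -setIA setIC -setIA subsetIl.
have K0_clique : K0 \in cliques far 5 far_block0.
  have card_A0 : #|A0'| = 5%N.
    have zero_block0 : (0 : word 6 4) \in block 0 by rewrite inE ffunE.
    have := cardsD1 (0 : word 6 4) (A :&: block 0).
    by rewrite block_cards // in_setI A0 zero_block0 add1n => -[].
  apply: (clique_of_code (min_lee_ge_sub sA0 dA) card_A0) => y yK.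
  rewrite (in_block_quads_of sA0b yK).
  apply: far_quads_of dA origin_A (mem_quads_of_sub sA0 yK) _.
  by apply: contraTneq yK => <-; rewrite mem_quads_of word_of_origin !inE eqxx.
have K0_blocks l :
    l != 0%N -> {in origin :: K0, forall z, (z \in quads_of A) && ~~ in_block l z}.
  move=> l0 z; rewrite in_cons => /predU1P [-> | zK].
    by rewrite origin_A (in_blockN (isT : in_block 0 origin) l0).
  by rewrite (mem_quads_of_sub sA0 zK) (in_blockN (in_block_quads_of sA0b zK) l0).
have K1_clique : K1 \in cliques far 6 (compatible 1 (origin :: K0)).
  exact: (compatible_clique (k := 1%N) cardA dA isT (K0_blocks 1%N isT)).
have K2_clique : K2 \in cliques far 6 (compatible 2 ((origin :: K0) ++ K1)).
  apply: (compatible_clique (k := 2%N) cardA dA isT) => z; rewrite mem_cat => /orP [zK | zK].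
    exact: (K0_blocks 2%N isT z zK).
  have z1 := in_block_quads_of (subsetIr _ _) zK.
  by rewrite (mem_quads_of_sub (subsetIl _ _) zK) (in_blockN z1 (isT : 2 != 1)%N).
have /hasP [e _ match_e] : matches_C0 (origin :: K0 ++ K1 ++ K2).
  by have /allP /(_ _ K0_clique) /allP /(_ _ K1_clique) /allP /(_ _ K2_clique) :=
    classification_certificate_holds.
exists e => y; rewrite -(perm_mem match_e); apply: eq_mem_map; apply: quads_of_cover => w.
rewrite /A0' in_setD1 !in_setI; have [-> | w0] := eqVneq w 0; first by rewrite A0.
by case: (w \in A); case/or3P: (word_block_cover w) => ->; rewrite ?orbT.
Qed.

Lemma sign_change_C0 (A : {set word 6 4}) e :
  map (flip_quad e) (quads_of A) =i c0_quads ->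
  [set lee_act 1 (sign_word e) 0 w | w in A] = C0.
Proof.
move=> match_e; apply/setP => w; rewrite C0_quads -(eq_mem_map word_of match_e) -map_comp.
have -> : map (word_of \o flip_quad e) (quads_of A) =
          map (lee_act 1 (sign_word e) 0) (map word_of (quads_of A)).
  rewrite -map_comp; apply/eq_in_map => x; rewrite mem_quads_of => /andP [bx _] /=.
  by rewrite flip_word_of.
by apply/imsetP/mapP => -[u uA ->]; exists u; rewrite ?quads_ofK in uA *.
Qed.

Theorem mainTheorem15 :
  #|C0| = 18%N /\ min_lee_ge C0 6 /\
  (forall C : {set word 6 4}, #|C| = 18%N -> min_lee_ge C 6 -> lee_equiv C C0).
Proof.
split; first exact: card_C0; split; first exact: min_lee_ge_C0.
move=> C cardC dC; have [u0 u0C] : exists u0, u0 \in C by apply/card_gt0P; rewrite cardC.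
pose translate := lee_act 1 [ffun=> false] [ffun i => - u0 i].
pose A := [set translate u | u in C].
have A0 : 0 \in A by rewrite -(translate_self u0) imset_f.
have cardA : #|A| = 18%N by rewrite card_lee_act.
have [e match_e] := sign_matching cardA (min_lee_ge_act dC) A0.
exists 1%g, (sign_word e), [ffun i => if sign_word e i then u0 i else - u0 i].
rewrite -(sign_change_C0 match_e) -imset_comp; apply: eq_imset => u /=.
by rewrite sign_after_translate.
Qed.
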